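(* Let $\kappa$ be an uncountable cardinal, let $X$ be a set of cardinality at least $\kappa$, let $\Gamma$ be the group of all permutations of $X$ acting by application, and let $I_\kappa$ be the ideal of subsets of $X$ of cardinality less than $\kappa$. Then $\Gamma\curvearrowright X, I_\kappa$ has cofinal orbits if and only if $\kappa$ is a successor cardinal.
   Context: For a group $\Gamma$ acting on $X$ and a $\Gamma$-invariant ideal $I$ on $X$ containing all singletons, and $a\subseteq X$, $\mathrm{pstab}(a)=\{\gamma\in\Gamma:\gamma\cdot x=x\ \forall x\in a\}$. For $a,b\in I$, $b$ is $a$-large if for every $c\in I$ there is $\gamma\in\mathrm{pstab}(a)$ with $c\subseteq\gamma\cdot b$, where $\gamma\cdot b=\{\gamma\cdot x:x\in b\}$. The dynamical ideal has cofinal orbits if for every $a\in I$ there is an $a$-large $b\in I$. *)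

From mathcomp Require Import all_boot.
From mathcomp Require Import boolp classical_sets functions cardinality.
Set Implicit Arguments. Unset Strict Implicit. Unset Printing Implicit Defensive.
Local Open Scope classical_set_scope.
Local Open Scope card_scope.

Definition card_lt T U (A : set T) (B : set U) : Prop := A #<= B /\ ~ (B #<= A).

(* The cardinal kappa is represented by a type K with |K| = kappa. *)
Definition uncountable_card (K : Type) : Prop := ~ countable [set: K].

(* kappa is a successor cardinal: kappa = lambda^+ for some cardinal lambda,
   i.e. among the cardinals below kappa (all realised by subsets of K)
   there is a largest one. *)
Definition successor_card (K : Type) : Prop :=
  exists L : set K, card_lt L [set: K] /\
    forall M : set K, card_lt M [set: K] -> M #<= L.

Definition Sym (X : Type) : set (X -> X) := [set g | bijective g].
Arguments Sym {X}.

Definition pstab (X : Type) (a : set X) : set (X -> X) :=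
  [set g | Sym g /\ forall x, a x -> g x = x].

Definition I_kappa (K X : Type) : set (set X) := [set A | card_lt A [set: K]].
Arguments I_kappa K X : clear implicits.

Definition large (K : Type) {X : Type} (a b : set X) : Prop :=
  forall c, I_kappa K X c -> exists2 g, pstab a g & c `<=` g @` b.

Definition cofinal_orbits (K X : Type) : Prop :=
  forall a, I_kappa K X a -> exists2 b, I_kappa K X b & large K a b.

(* If b is set0-large, every set of size < kappa embeds into b, so |b| is the
   largest cardinal below kappa.  Conversely, if kappa = lambda^+, then I_kappa
   consists of the sets of size <= lambda; it is closed under binary unions
   (lambda + lambda = lambda, via Zorn) and the complement of each of its members
   has size >= lambda.  Given a, pick D disjoint from a with |D| = lambda; then
   a `|` D is a-large: for c in I_kappa, a permutation fixing a first moves D to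
   fresh points and then swaps c \ a with part of the image of D. *)

From mathcomp Require Import all_boot.
From mathcomp Require Import boolp classical_sets functions cardinality.
From mathcomp Require Import zify.
Set Implicit Arguments. Unset Strict Implicit. Unset Printing Implicit Defensive.
Local Open Scope classical_set_scope.
Local Open Scope card_scope.

Definition inj_on T U (A : set T) (B : set U) (f : T -> U) :=
  (forall x, A x -> B (f x)) /\ (forall x y, A x -> A y -> f x = f y -> x = y).

Lemma card_le_inj_on T U (A : set T) (B : set U) f : inj_on A B f -> A #<= B.
Proof.
move=> [fAB finj]; have [g] : $|{injfun A >-> B}|.
  by apply/injfunPex; exists f => // x y; rewrite !inE; apply: finj.
exact: inj_card_le g.
Qed.

Lemma card_le_inj_onP T U (u0 : U) (A : set T) (B : set U) :
  A #<= B <-> exists f, inj_on A B f.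
Proof.
split=> [|[f /card_le_inj_on//]].
elim/Ppointed: U => U in u0 B *; first by case: (no u0).
move/pcard_leP => [g].
have [f fAB finj] : exists2 f : T -> U, set_fun A B f & set_inj A f.
  by apply/injfunPex; squash g.
by exists f; split => // x y Ax Ay; apply: finj; rewrite inE.
Qed.

Section InjectiveGraph.
Variables (T U : Type) (A : set T) (B : set U).

Definition inj_graph (G : set (T * U)) :=
  (forall p, G p -> A p.1 /\ B p.2) /\
  (forall p q, G p -> G q -> (p.1 = q.1 <-> p.2 = q.2)).

Lemma inj_graph1 a b : A a -> B b -> inj_graph [set (a, b)].
Proof. by move=> Aa Bb; split=> [p ->|p q -> ->]. Qed.

Lemma inj_graphU G1 G2 : inj_graph G1 -> inj_graph G2 ->
  (forall p q, G1 p -> G2 q -> p.1 <> q.1 /\ p.2 <> q.2) ->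
  inj_graph (G1 `|` G2).
Proof.
move=> [G1AB G1inj] [G2AB G2inj] G12; split=> [p [/G1AB|/G2AB]//|p q].
case=> [G1p|G2p] [G1q|G2q].
- exact: G1inj.
- by have [n1 n2] := G12 _ _ G1p G2q.
- by have [n1 n2] := G12 _ _ G1q G2p; split=> E; [case: n1|case: n2].
- exact: G2inj.
Qed.

Lemma inj_graph_bigcup (F : set (set (T * U))) :
  F `<=` inj_graph -> total_on F subset -> inj_graph (\bigcup_(G in F) G).
Proof.
move=> Finj Ftot; split=> [p [G /Finj[GAB _] /GAB]//|].
move=> p q [G1 F1 G1p] [G2 F2 G2q]; have [s12|s21] := Ftot _ _ F1 F2.
  exact: (Finj _ F2).2 p q (s12 _ G1p) G2q.
exact: (Finj _ F1).2 p q G1p (s21 _ G2q).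
Qed.

Lemma card_le_inj_graph G : inj_graph G ->
  (forall a, A a -> exists b, G (a, b)) -> A #<= B.
Proof.
move=> [GAB Ginj] Gdom.
have [->|/set0P[a0 /Gdom[b0 _]]] := eqVneq A set0; first exact: card_ge0.
pose f a := if pselect (exists b, G (a, b)) is left h then projT1 (cid h) else b0.
have fG a : A a -> G (a, f a).
  by rewrite /f; case: pselect => [h _|nh /Gdom/nh[]]; exact: projT2 (cid h).
apply: (@card_le_inj_on _ _ _ _ f); split=> [a /fG /GAB[]//|x y Ax Ay fxy].
exact/(Ginj _ _ (fG x Ax) (fG y Ay)).
Qed.

End InjectiveGraph.

Lemma card_le_total T U (A : set T) (B : set U) : A #<= B \/ B #<= A.
Proof.
have [|G [Ginj Gmax]] := Zorn_bigcup (P := inj_graph A B).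
  exact: inj_graph_bigcup.
have [Gdom|/existsNP[a /not_implyP[Aa na]]] :=
  pselect (forall a, A a -> exists b, G (a, b)).
  by left; apply: card_le_inj_graph Ginj Gdom.
have [Grng|/existsNP[b /not_implyP[Bb nb]]] :=
  pselect (forall b, B b -> exists a, G (a, b)).
  right; apply: (@card_le_inj_graph _ _ _ _ [set p | G (p.2, p.1)]).
    case: Ginj => GAB GG; split=> [[y x] /GAB[]//|[y x] [y' x'] /= h h'].
    by split=> E; apply/(GG _ _ h h').
  by move=> y /Grng[x]; exists x.
exfalso; apply: (Gmax (G `|` [set (a, b)])).
  split=> [p Gp|/(_ (a, b) (or_intror erefl)) Gab]; first by left.
  by apply: na; exists b.
apply: inj_graphU => //; first exact: inj_graph1.
move=> [x y] _ Gxy ->; split=> /= E.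
  by apply: na; exists y; rewrite -E.
by apply: nb; exists x; rewrite -E.
Qed.

Lemma card_le_setU_finite T (S F : set T) :
  [set: nat] #<= S -> finite_set F -> S `|` F #<= S.
Proof.
move=> natS finF; have [s0 _] := infinite_setN0 (proj2 (infiniteP S) natS).
have [e [eS einj]] := (card_le_inj_onP s0 _ _).1 natS.
have {}einj n m : e n = e m -> n = m by apply: einj.
have /finite_setP[k /card_eqPle[FSk _]] := finite_setD S finF.
have [idx [idxk idxinj]] := (card_le_inj_onP 0%N _ _).1 FSk.
pose psi y := if pselect ((F `\` S) y) is left _ then e (idx y)
  else if pselect (exists n, y = e n) is left h then e (k + projT1 (cid h))%N
  else y.
have idx_lt_shift y n : (F `\` S) y -> idx y <> (k + n)%N.
  by move=> FSy E; have := idxk y FSy; rewrite /= E ltnNge leq_addr.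
apply: (@card_le_inj_on _ _ _ _ psi); split.
  move=> y SFy; rewrite /psi; case: pselect => [_|nFS]; first exact: eS.
  case: pselect => [h|_]; first exact: eS.
  by case: SFy => // Fy; apply: contrapT => nSy; apply: nFS.
move=> x y _ _; rewrite /psi.
case: (pselect ((F `\` S) x)) => [FSx|nFSx];
  case: (pselect ((F `\` S) y)) => [FSy|nFSy].
- by move/einj; apply: idxinj.
- case: pselect => [h|ny] /=; first by move/einj/(idx_lt_shift _ _ FSx).
  by move=> exy; case: ny; exists (idx x).
- case: pselect => [h|nx] /=; first by move/esym/einj/(idx_lt_shift _ _ FSy).
  by move=> exy; case: nx; exists (idx y).
- case: pselect => [hx|nx]; case: pselect => [hy|ny].
  + move/einj/eqP; rewrite eqn_add2l => /eqP E.
    by rewrite (projT2 (cid hx)) (projT2 (cid hy)) E.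
  + by move=> exy; case: ny; exists (k + projT1 (cid hx))%N.
  + by move=> exy; case: nx; exists (k + projT1 (cid hy))%N.
  + by [].
Qed.

Section Doubling.
Variables (U : Type) (L : set U).

(* [G] is the graph of a bijection from [S * bool] onto its range [S]. *)
Definition doubling_graph (G : set ((U * bool) * U)) :=
  inj_graph [set p | L p.1] L G /\
  forall u b, (exists y, G ((u, b), y)) <-> (exists p, G (p, u)).

Lemma doubling_graph_bigcup F : F `<=` doubling_graph ->
  total_on F subset -> doubling_graph (\bigcup_(G in F) G).
Proof.
move=> Fd Ftot; split; first by apply: inj_graph_bigcup => // G /Fd[].
move=> u b; split=> [[y [G FG Gy]]|[p [G FG Gp]]]; have [_ GS] := Fd _ FG.
  by have [p Gp] := (GS u b).1 (ex_intro _ y Gy); exists p, G.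
by have [y Gy] := (GS u b).2 (ex_intro _ p Gp); exists y, G.
Qed.

Lemma doubling_graphU G1 G2 : doubling_graph G1 -> doubling_graph G2 ->
  (forall p q, G1 p -> G2 q -> p.2 <> q.2) -> doubling_graph (G1 `|` G2).
Proof.
move=> [G1inj G1S] [G2inj G2S] G12; split.
  apply: inj_graphU => // -[[u b] y] [[v c] z] G1p G2q.
  split; last exact: G12 G1p G2q.
  move=> [E _]; have [p G1pu] := (G1S u b).1 (ex_intro _ y G1p).
  have [q G2qv] := (G2S v c).1 (ex_intro _ z G2q).
  exact: (G12 _ _ G1pu G2qv E).
move=> u b; split=> [[y [G1y|G2y]]|[p [G1p|G2p]]].
- by have [p Gp] := (G1S u b).1 (ex_intro _ y G1y); exists p; left.
- by have [p Gp] := (G2S u b).1 (ex_intro _ y G2y); exists p; right.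
- by have [y Gy] := (G1S u b).2 (ex_intro _ p G1p); exists y; left.
- by have [y Gy] := (G2S u b).2 (ex_intro _ p G2p); exists y; right.
Qed.

Lemma doubling_graph_nat (e : nat -> U) : inj_on setT L e ->
  doubling_graph [set q | exists n (b : bool), q = ((e n, b), e (2 * n + b)%N)].
Proof.
move=> [eL einj]; have {}einj n m : e n = e m -> n = m by apply: einj.
split; first split.
- by move=> _ [n [b ->]]; split; apply: eL.
- move=> _ _ [n [b ->]] [m [c ->]] /=; split=> [[/einj -> ->]//|/einj E].
  by have [-> ->] : n = m /\ b = c by case: b c E => [] []; lia.
move=> u b; split=> [[_ [n [c [-> _ _]]]]|[_ [n [c [_ ->]]]]].
  exists (e n./2, odd n); exists n./2, (odd n).
  by rewrite addnC mul2n odd_double_half.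
by exists (e (2 * (2 * n + c) + b)%N), (2 * n + c)%N, b.
Qed.

(* A maximal doubling graph leaves only finitely many points of [L] outside
   its range: otherwise a copy of [nat * bool ~ nat] could be adjoined. *)
Lemma card_le_doubling : [set: nat] #<= L -> [set p : U * bool | L p.1] #<= L.
Proof.
move=> natL; have [u0 _] := infinite_setN0 (proj2 (infiniteP L) natL).
have [|G [[[GL Ginj] GS] Gmax]] := Zorn_bigcup (P := doubling_graph).
  exact: doubling_graph_bigcup.
pose S := [set u | exists p, G (p, u)].
have GS1 p y : G (p, y) -> S p.1.
  by case: p => u b Gp; apply/(GS u b).1; exists y.
have SL : S `<=` L by move=> u [p /GL[]].
have finLS : finite_set (L `\` S).
  apply: contrapT => /infiniteP /(card_le_inj_onP u0) [e [eLS einj]].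
  have eL : inj_on setT L e by split=> // n /eLS[].
  apply: (Gmax _ _ (doubling_graphU (conj (conj GL Ginj) GS)
                                     (doubling_graph_nat eL) _)).
    split=> [p Gp|/(_ ((e 0, true), e 1%N))]; first by left.
    move=> /(_ (or_intror (ex_intro _ 0%N (ex_intro _ true erefl)))) Ge.
    by apply: (eLS 0%N I).2; apply: GS1 Ge.
  move=> [p y] _ Gp [n [b ->]] /= E.
  by apply: (eLS (2 * n + b)%N I).2; rewrite -E; exists p.
have natS : [set: nat] #<= S.
  apply/infiniteP => finS; apply: (proj2 (infiniteP L) natL).
  by rewrite -(setDUK SL) finite_setU.
have /(card_le_inj_onP u0)[psi [psiS psiinj]] : L #<= S.
  by rewrite -[X in X #<= _](setDUK SL); apply: card_le_setU_finite.
apply: (@card_le_trans _ _ _ [set p : U * bool | S p.1]).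
  apply: (@card_le_inj_on _ _ _ _ (fun p => (psi p.1, p.2))).
  by split=> [p /psiS//|[x b] [y c] /= Lx Ly [/psiinj -> // ->]].
apply: (@card_le_trans _ _ _ S); last exact: subset_card_le.
apply: (@card_le_inj_graph _ _ _ _ G).
  by split=> [[p y] Gp|]; [split; [exact: GS1 Gp|exists p] | exact: Ginj].
by move=> [u b] /= Su; apply/(GS u b).2.
Qed.

End Doubling.

Lemma card_le_setU T U (A B : set T) (L : set U) : [set: nat] #<= L ->
  A #<= L -> B #<= L -> A `|` B #<= L.
Proof.
move=> natL AL BL; have [u0 _] := infinite_setN0 (proj2 (infiniteP L) natL).
have [fA [fAL fAinj]] := (card_le_inj_onP u0 _ _).1 AL.
have [fB [fBL fBinj]] := (card_le_inj_onP u0 _ _).1 BL.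
apply: card_le_trans (card_le_doubling natL).
pose f x := if pselect (A x) is left _ then (fA x, true) else (fB x, false).
apply: (@card_le_inj_on _ _ _ _ f); split.
  by move=> x; rewrite /f; case: pselect => [/fAL//|nAx [//|/fBL]].
move=> x y ABx ABy; rewrite /f.
case: (pselect (A x)) => [Ax|nAx]; case: (pselect (A y)) => [Ay|nAy] //=.
- by case=> /fAinj; apply.
- by case=> /fBinj; apply; [case: ABx|case: ABy].
Qed.

Lemma card_le_lt_trans T U V (A : set T) (B : set U) (C : set V) :
  A #<= B -> card_lt B C -> card_lt A C.
Proof.
move=> AB [BC nCB]; split; first exact: card_le_trans AB BC.
by move=> CA; apply: nCB; apply: card_le_trans CA AB.
Qed.

Lemma uncountable_nat_lt K : uncountable_card K -> card_lt [set: nat] [set: K].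
Proof.
move=> unc; split=> [|//]; apply/infiniteP => finK.
exact/unc/finite_set_countable.
Qed.

Section SuccessorCard.
Variables (K : Type) (L : set K).
Hypotheses (LK : card_lt L [set: K])
           (Lmax : forall M : set K, card_lt M [set: K] -> M #<= L).

Lemma successor_card_ltE T (A : set T) : card_lt A [set: K] <-> A #<= L.
Proof.
split=> [AK|AL]; last exact: card_le_lt_trans AL LK.
have /card_subP[M /card_eqPle[MA AM] _] := AK.1.
exact: card_le_trans AM (Lmax (card_le_lt_trans MA AK)).
Qed.

Lemma successor_card_compl T (S : set T) : [set: nat] #<= L ->
  [set: K] #<= [set: T] -> S #<= L -> L #<= ~` S.
Proof.
move=> natL KT SL; have [//|coSL] := card_le_total L (~` S).
have [_ []] := LK; apply: card_le_trans KT _.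
by rewrite -(setUv S); apply: card_le_setU.
Qed.

End SuccessorCard.

Section SwapAlong.
Variables (X : Type) (P : set X) (s : X -> X).
Hypotheses (sinj : forall x y, P x -> P y -> s x = s y -> x = y)
           (sP : forall x, P x -> ~ P (s x)).

Definition swap_along x :=
  if pselect (P x) is left _ then s x
  else if pselect (exists y, P y /\ s y = x) is left h then projT1 (cid h)
  else x.

Lemma swap_alongE x : P x -> swap_along x = s x.
Proof. by rewrite /swap_along; case: pselect. Qed.

Lemma swap_along_image y : P y -> swap_along (s y) = y.
Proof.
move=> Py; rewrite /swap_along; case: pselect => [/(sP Py)//|_].
case: pselect => [h|[]]; last by exists y.
by have [Pz sz] := projT2 (cid h); apply: sinj.
Qed.

Lemma swap_along_id x : ~ P x -> ~ (exists y, P y /\ s y = x) ->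
  swap_along x = x.
Proof.
move=> nPx nsx; rewrite /swap_along; case: pselect => [/nPx//|_].
by case: pselect => [h|//]; case: nsx.
Qed.

Lemma swap_alongK : involutive swap_along.
Proof.
move=> x; have [Px|nPx] := pselect (P x).
  by rewrite (swap_alongE Px) swap_along_image.
have [[y [Py <-]]|nsx] := pselect (exists y, P y /\ s y = x).
  by rewrite (swap_along_image Py) swap_alongE.
by rewrite !swap_along_id.
Qed.

Lemma Sym_swap_along : Sym swap_along.
Proof. exact: inv_bij swap_alongK. Qed.

End SwapAlong.

(* First move [D] out of the way along [sig], then bring [c \ a] onto the
   image of [D] by swapping it with [sig (t0 _)]. *)
Lemma pstab_cover X (a D c : set X) (sig t0 : X -> X) :
  D `<=` ~` a -> inj_on D (~` (a `|` D `|` c)) sig -> inj_on (c `\` a) D t0 ->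
  exists2 g, pstab a g & c `<=` g @` (a `|` D).
Proof.
move=> Da [sigS siginj] [t0D t0inj].
have sigD x : D x -> ~ D (sig x) by move=> /sigS + Dsx; apply; left; right.
have sig_a x : D x -> ~ a (sig x) by move=> /sigS + asx; apply; left; left.
pose t := sig \o t0.
have tinj x y : (c `\` a) x -> (c `\` a) y -> t x = t y -> x = y.
  by move=> cx cy /(siginj _ _ (t0D _ cx) (t0D _ cy)); apply: t0inj.
have tc x : (c `\` a) x -> ~ (c `\` a) (t x).
  by move=> /t0D /sigS + [ctx _]; apply; right.
pose g1 := swap_along D sig; pose g2 := swap_along (c `\` a) t.
have g1a x : a x -> g1 x = x.
  move=> ax; apply: swap_along_id => [/Da//|[y [Dy syx]]].
  by apply: (sig_a _ Dy); rewrite syx.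
have g2a x : a x -> g2 x = x.
  move=> ax; apply: swap_along_id => [[_ /(_ ax)]//|[y [cy tyx]]].
  by apply: (sig_a _ (t0D _ cy)); rewrite -[sig _]/(t y) tyx.
have fix_a x : a x -> g2 (g1 x) = x by move=> ax; rewrite g1a ?g2a.
exists (g2 \o g1).
  split; last exact: fix_a.
  exact: bij_comp (Sym_swap_along tinj tc) (Sym_swap_along siginj sigD).
move=> x cx; have [ax|nax] := pselect (a x); first by exists x; [left|apply: fix_a].
have cax : (c `\` a) x by [].
exists (t0 x); first by right; apply: t0D.
have /= -> : g1 (t0 x) = t x by apply: swap_alongE; apply: t0D.
exact: swap_along_image.
Qed.

Lemma successor_card_cofinal_orbits K X : uncountable_card K ->
  [set: K] #<= [set: X] -> successor_card K -> cofinal_orbits K X.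
Proof.
move=> unc KX [L [LK Lmax]].
have IE A : I_kappa K X A <-> A #<= L := successor_card_ltE LK Lmax A.
have natL : [set: nat] #<= L.
  exact/(successor_card_ltE LK Lmax)/uncountable_nat_lt.
have compl S : S #<= L -> L #<= ~` S := successor_card_compl LK natL KX.
have UL A B : A #<= L -> B #<= L -> A `|` B #<= L := card_le_setU natL.
have [x0 _] : [set: X] !=set0.
  by apply/infinite_setN0/infiniteP/(card_le_trans (uncountable_nat_lt unc).1).
move=> a /IE aL; have /card_subP[D /card_eqPle[DL LD] Da] := compl a aL.
exists (a `|` D); first by apply/IE; apply: UL.
move=> c /IE cL; have SL : a `|` D `|` c #<= L by apply: (UL) => //; apply: (UL).
have [sig sigD] := (card_le_inj_onP x0 _ _).1 (card_le_trans DL (compl _ SL)).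
have [t0 t0D] := (card_le_inj_onP x0 _ _).1
  (card_le_trans (card_le_trans (card_le_setD c a) cL) LD).
exact: pstab_cover Da sigD t0D.
Qed.

Lemma cofinal_orbits_successor_card K X : uncountable_card K ->
  [set: K] #<= [set: X] -> cofinal_orbits K X -> successor_card K.
Proof.
move=> unc KX cof.
have I0 : I_kappa K X set0.
  exact: card_le_lt_trans (card_ge0 _ _) (uncountable_nat_lt unc).
have [b Ib blarge] := cof set0 I0.
have /card_subP[L /card_eqPle[Lb bL] _] := Ib.1.
exists L; split=> [|M MK]; first exact: card_le_lt_trans Lb Ib.
have /card_subP[c /card_eqPle[cM Mc] _] := card_le_trans MK.1 KX.
have [g _ cg] := blarge c (card_le_lt_trans cM MK).
apply: card_le_trans Mc (card_le_trans (subset_card_le cg) _).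
exact: card_le_trans (card_image_le _ _) bL.
Qed.

Theorem mainTheorem6 (K X : Type) :
  uncountable_card K -> [set: K] #<= [set: X] ->
  (cofinal_orbits K X <-> successor_card K).
Proof.
move=> unc KX; split.
  exact: cofinal_orbits_successor_card.
exact: successor_card_cofinal_orbits.
Qed.
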